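(* Let $\mathcal{C}$ be a set of representatives of the isomorphism classes of finite connected racks. For $C\in\mathcal{C}$, let $\Phi_C\colon \mathrm{B}(\mathcal{R})\to\mathbb{Z}$ be the ring homomorphism determined by $\Phi_C(b(R))=|\mathrm{Mor}_{\mathcal{R}}(C,R)|$ for finite racks $R$, where $\mathrm{Mor}_{\mathcal{R}}(C,R)$ is the set of rack morphisms $C\to R$. Then the ring homomorphism $$\prod_{C\in\mathcal{C}}\Phi_C\colon \mathrm{B}(\mathcal{R})\longrightarrow\prod_{C\in\mathcal{C}}\mathbb{Z}$$ is injective.
   Context: A rack is a set $R$ with a binary operation $\rhd$ such that every left multiplication $\ell_a\colon b\mapsto a\rhd b$ is a bijection and $a\rhd(b\rhd c)=(a\rhd b)\rhd(a\rhd c)$ for all $a,b,c$. Morphisms of racks are maps preserving $\rhd$; the product $R\times S$ of racks is the cartesian product with componentwise operation. The inner automorphism group $\mathrm{Inn}(R)$ is the subgroup of the symmetric group on $R$ generated by all $\ell_a$. A rack is connected if it is non-empty and $\mathrm{Inn}(R)$ acts transitively on $R$. A subrack of $R$ is a subset $S$ with $\ell_s(S)=S$ for all $s\in S$. A decomposition of $R$ into $S$ and $T$ means that $S,T$ are disjoint subracks (possibly empty) with $S\cup T=R$. The Burnside ring of finite racks $\mathrm{B}(\mathcal{R})$ is the abelian group generated by symbols $b(R)$, one for each finite rack $R$, subject to the relations $b(R_1)=b(R_2)$ whenever $R_1\cong R_2$, and $b(R)=b(S)+b(T)$ whenever $R$ decomposes into subracks $S$ and $T$; it is a commutative ring with $b(R)b(R')=b(R\times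 R')$ and unit $b(\star)$, $\star$ the one-element rack. (That $\Phi_C$ is a well-defined ring homomorphism is part of the setting.) *)

From HB Require Import structures.
From mathcomp Require Import all_boot all_order all_algebra all_fingroup.
From mathcomp Require Import boolp.
Set Implicit Arguments. Unset Strict Implicit. Unset Printing Implicit Defensive.
Import GRing.Theory.
Local Open Scope ring_scope.

Record FinRack := MkFinRack {
  rcar :> finType;
  rop : rcar -> rcar -> rcar;
  rop_bij : forall a, bijective (rop a);
  rop_dist : forall a b c, rop a (rop b c) = rop (rop a b) (rop a c)
}.

Definition is_rack_mor (R S : FinRack) (f : R -> S) : Prop :=
  forall a b, f (rop a b) = rop (f a) (f b).

Definition Mor (C R : FinRack) : {set {ffun C -> R}} :=
  [set f : {ffun C -> R} | [forall a, forall b, f (rop a b) == rop (f a) (f b)]].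

Definition rack_iso (R S : FinRack) : Prop :=
  exists f : R -> S, is_rack_mor f /\ bijective f.

Definition lperm (R : FinRack) (a : R) : {perm R} := perm (bij_inj (rop_bij a)).

Definition Inn (R : FinRack) : {set {perm R}} := <<[set lperm a | a : R]>>%g.

Definition connected_rack (R : FinRack) : Prop :=
  (0 < #|R|)%N /\ forall x y : R, exists2 g, g \in Inn R & g x = y.

Definition subrack (R : FinRack) (S : {set R}) : Prop :=
  forall s, s \in S -> rop s @: S = S.

Section SubRack.
Variables (R : FinRack) (S : {set R}) (HS : subrack S).

Definition sub_car : finType := {x : R | x \in S}.

Lemma sub_op_in (x y : sub_car) : rop (val x) (val y) \in S.
Proof.
have H := HS (valP x).
have : rop (val x) (val y) \in rop (val x) @: S by apply: imset_f; exact: valP.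
by rewrite H.
Qed.

Definition sub_op (x y : sub_car) : sub_car := exist (fun z : R => z \in S) _ (sub_op_in x y).

Lemma sub_op_bij a : bijective (sub_op a).
Proof.
apply: injF_bij => x y /(congr1 val) /= H.
by apply: val_inj; exact: (bij_inj (rop_bij (val a)) H).
Qed.

Lemma sub_op_dist a b c : sub_op a (sub_op b c) = sub_op (sub_op a b) (sub_op a c).
Proof. by apply: val_inj; rewrite /= rop_dist. Qed.

Definition subRack : FinRack := MkFinRack sub_op_bij sub_op_dist.
End SubRack.

(* Free abelian group on (finite racks): formal Z-linear combinations.  *)
Definition fsum := seq (int * FinRack).

Definition fcoef (x : fsum) (R : FinRack) : int :=
  \sum_(p <- x) (if `[< p.2 = R >] then p.1 else 0).

Definition relator (r : fsum) : Prop :=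
  (exists R1 R2 : FinRack, rack_iso R1 R2 /\ r = [:: (1, R1); (-1, R2)]) \/
  (exists (R : FinRack) (S T : {set R}) (HS : subrack S) (HT : subrack T),
      [disjoint S & T] /\ S :|: T = setT /\
      r = [:: (1, R); (-1, subRack HS); (-1, subRack HT)]).

(* x and y define the same element of B(R): x - y lies in the subgroup of the
   free abelian group generated by the relators. *)
Definition burnside_eq (x y : fsum) : Prop :=
  exists (n : nat) (k : 'I_n -> int) (r : 'I_n -> fsum),
    (forall i, relator (r i)) /\
    forall R, fcoef x R - fcoef y R = \sum_(i < n) k i * fcoef (r i) R.

Definition Phi (C : FinRack) (x : fsum) : int :=
  \sum_(p <- x) p.1 * (#|Mor C p.2|)%:Z.

From HB Require Import structures.
From mathcomp Require Import all_boot all_order all_algebra all_fingroup.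
From mathcomp Require Import boolp.
From mathcomp Require Import ring.
Set Implicit Arguments. Unset Strict Implicit. Unset Printing Implicit Defensive.
Import GRing.Theory Num.Theory.
Local Open Scope ring_scope.

(* Phi_C kills the relators when C is connected, so it is well defined on the Burnside ring.
   Splitting off an orbit of Inn(R) decomposes every finite rack, so every element of the
   Burnside ring is represented by a formal sum z of representatives.  Grouping the morphisms
   C -> D by their image, a connected subrack of D, gives
   Phi_C = sum_E Surj(C, E) Psi_E, where Psi_E(b(D)) counts the copies of E in D; since
   Surj(C, E) = 0 unless |E| <= |C| and Surj(C, C) > 0, the vanishing of every Phi_C(z) forces
   Psi_E(z) = 0 for all connected E, by induction on |E|.  For representatives R and D with
   |D| <= |R| the number of copies of R in D is [D = R], so a descending induction on |R|
   shows that every coefficient of z vanishes. *)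

Lemma big_fiber_eq0 (T U : Type) (kappa : T -> U) (s : seq T) (w g : T -> int) :
  (forall x y, kappa x = kappa y -> g x = g y) ->
  (forall x, g x != 0 -> \sum_(y <- s | `[< kappa y = kappa x >]) w y = 0) ->
  \sum_(x <- s) w x * g x = 0.
Proof.
move=> gK; have [n] := ubnP (size s); elim: n s => // n IHn [|x s] /= lt_sn fiber0.
  by rewrite big_nil.
rewrite (bigID (fun y => `[< kappa y = kappa x >])) /=.
have -> : \sum_(y <- x :: s | `[< kappa y = kappa x >]) w y * g y = 0.
  rewrite (eq_bigr (fun y => w y * g x)) => [|y /asboolP /gK -> //].
  rewrite -big_distrl /=.
  by have [->|/fiber0 ->] := eqVneq (g x) 0; rewrite ?mulr0 ?mul0r.
rewrite add0r big_cons asboolT //= -big_filter.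
apply: IHn => [|x' gx'0]; first by rewrite size_filter (leq_ltn_trans (count_size _ _)).
rewrite big_filter_cond.
have [e|ne] := pselect (kappa x' = kappa x).
  by rewrite big_pred0 // => y; rewrite e andNb.
rewrite -[RHS](fiber0 x' gx'0) big_cons asboolF; last by move/esym.
apply: eq_bigl => y.
case: (asboolP (kappa y = kappa x')) => [e|]; rewrite ?andbF ?andbT //.
by apply/negP => /asboolP; rewrite e.
Qed.

Definition fsum_eval (h : FinRack -> int) (x : fsum) : int :=
  \sum_(p <- x) p.1 * h p.2.

Definition fsum_scale (c : int) (x : fsum) : fsum := [seq (c * p.1, p.2) | p <- x].

Lemma fsum_eval_nil h : fsum_eval h [::] = 0.
Proof. exact: big_nil. Qed.

Lemma fsum_eval_cons h p x : fsum_eval h (p :: x) = p.1 * h p.2 + fsum_eval h x.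
Proof. exact: big_cons. Qed.

Lemma fsum_eval_cat h x y : fsum_eval h (x ++ y) = fsum_eval h x + fsum_eval h y.
Proof. exact: big_cat. Qed.

Lemma fsum_eval_scale h c x : fsum_eval h (fsum_scale c x) = c * fsum_eval h x.
Proof. by rewrite /fsum_eval big_map big_distrr; apply: eq_bigr => p _ /=; rewrite mulrA. Qed.

Lemma fsum_eval_flatten h xs : fsum_eval h (flatten xs) = \sum_(x <- xs) fsum_eval h x.
Proof. exact: big_flatten. Qed.

Definition fsum_evalE := (fsum_eval_nil, fsum_eval_cons, fsum_eval_cat, fsum_eval_scale).

Lemma fsum_evalD (h1 h2 : FinRack -> int) x :
  fsum_eval (fun D => h1 D + h2 D) x = fsum_eval h1 x + fsum_eval h2 x.
Proof. by rewrite /fsum_eval -big_split; apply: eq_bigr => p _; rewrite mulrDr. Qed.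

Lemma fsum_evalZ (c : int) (h : FinRack -> int) x :
  fsum_eval (fun D => c * h D) x = c * fsum_eval h x.
Proof. by rewrite /fsum_eval big_distrr; apply: eq_bigr => p _; rewrite mulrCA. Qed.

Lemma fsum_evalB (h1 h2 : FinRack -> int) x :
  fsum_eval (fun D => h1 D - h2 D) x = fsum_eval h1 x - fsum_eval h2 x.
Proof. by rewrite /fsum_eval -sumrB; apply: eq_bigr => p _; rewrite mulrBr. Qed.

Lemma fcoefE x R : fcoef x R = fsum_eval (fun D => if `[< D = R >] then 1 else 0) x.
Proof. by apply: eq_bigr => p _; case: ifP; rewrite ?mulr1 ?mulr0. Qed.

Lemma PhiE C x : Phi C x = fsum_eval (fun R => #|Mor C R|%:Z) x.
Proof. by []. Qed.

Lemma fsum_eval_eq0 (h : FinRack -> int) x :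
  (forall D, h D != 0 -> fcoef x D = 0) -> fsum_eval h x = 0.
Proof.
move=> fcoef0; apply: (big_fiber_eq0 (kappa := snd)) => [p q -> //|p /fcoef0].
by move=> fp0; rewrite -[RHS]fp0 /fcoef big_mkcond.
Qed.

Definition spanned (v : FinRack -> int) : Prop :=
  exists (n : nat) (k : 'I_n -> int) (r : 'I_n -> fsum),
    (forall i, relator (r i)) /\ forall R, v R = \sum_(i < n) k i * fcoef (r i) R.

Lemma spanned_ext u v : (forall R, u R = v R) -> spanned u -> spanned v.
Proof. by move=> uv [n [k [r [rel_r Eu]]]]; exists n, k, r; split=> // R; rewrite -uv Eu. Qed.

Lemma spanned_relator r : relator r -> spanned (fcoef r).
Proof.
by move=> rel_r; exists 1%N, (fun=> 1), (fun=> r); split=> // R; rewrite big_ord1 mul1r.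
Qed.

Lemma spanned0 : spanned (fun=> 0).
Proof. by exists 0%N, (fun=> 0), (fun=> [::]); split=> [[]//|R]; rewrite big_ord0. Qed.

Lemma spannedD u v : spanned u -> spanned v -> spanned (fun R => u R + v R).
Proof.
move=> [m [k [r [rel_r Eu]]]] [n [k' [r' [rel_r' Ev]]]].
pose pick (T : Type) (f : 'I_m -> T) (f' : 'I_n -> T) i :=
  match split i with inl j => f j | inr j => f' j end.
exists (m + n)%N, (pick _ k k'), (pick _ r r'); split=> [i|R].
  by rewrite /pick; case: split.
by rewrite big_split_ord Eu Ev /pick; congr (_ + _);
  apply: eq_bigr => i _; rewrite ?(unsplitK (inl _ _)) ?(unsplitK (inr _ _)).
Qed.

Lemma spannedZ c v : spanned v -> spanned (fun R => c * v R).
Proof.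
move=> [n [k [r [rel_r Ev]]]]; exists n, (fun i => c * k i), r; split=> // R.
by rewrite Ev big_distrr; apply: eq_bigr => i _; rewrite -mulrA.
Qed.

Lemma burnside_eq_fcoef x y : (forall R, fcoef x R = fcoef y R) -> burnside_eq x y.
Proof. by move=> xy; apply: spanned_ext spanned0 => R; rewrite xy subrr. Qed.

Lemma burnside_eq_sym x y : burnside_eq x y -> burnside_eq y x.
Proof. by move/(spannedZ (-1)); apply: spanned_ext => R; rewrite mulN1r opprB. Qed.

Lemma burnside_eq_trans x y z : burnside_eq x y -> burnside_eq y z -> burnside_eq x z.
Proof. by move=> xy /(spannedD xy); apply: spanned_ext => R; rewrite addrA subrK. Qed.

Lemma burnside_eq_cat x x' y y' :
  burnside_eq x x' -> burnside_eq y y' -> burnside_eq (x ++ y) (x' ++ y').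
Proof.
move=> xx' /(spannedD xx'); apply: spanned_ext => R.
by rewrite !fcoefE !fsum_eval_cat; ring.
Qed.

Lemma burnside_eq_scale c x y : burnside_eq x y -> burnside_eq (fsum_scale c x) (fsum_scale c y).
Proof.
move/(spannedZ c); apply: spanned_ext => R.
by rewrite !fcoefE !fsum_eval_scale mulrBr.
Qed.

Lemma fsum_eval_burnside (h : FinRack -> int) :
  (forall r, relator r -> fsum_eval h r = 0) ->
  forall x y, burnside_eq x y -> fsum_eval h x = fsum_eval h y.
Proof.
move=> h_rel x y [n [k [r [rel_r Exy]]]].
pose z := x ++ fsum_scale (-1) y ++ flatten [seq fsum_scale (- k i) (r i) | i : 'I_n].
have evalz g : fsum_eval g z =
    fsum_eval g x - fsum_eval g y - \sum_(i < n) k i * fsum_eval g (r i).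
  rewrite !fsum_eval_cat fsum_eval_flatten big_image fsum_eval_scale mulN1r addrA.
  congr (_ + _); rewrite -sumrN; apply: eq_big => // i _.
  by rewrite fsum_eval_scale mulNr.
have : fsum_eval h z = 0.
  apply: fsum_eval_eq0 => D _; rewrite fcoefE evalz -!fcoefE Exy.
  by apply/eqP; rewrite subr_eq0; apply/eqP/eq_bigr => i _; rewrite fcoefE.
rewrite evalz big1 => [|i _]; last by rewrite h_rel ?mulr0.
by rewrite subr0 => /eqP; rewrite subr_eq0 => /eqP.
Qed.

Lemma MorP (C R : FinRack) (f : {ffun C -> R}) : reflect (is_rack_mor f) (f \in Mor C R).
Proof.
rewrite inE; apply: (iffP forallP) => [fM a b|fM a]; first exact/eqP/(forallP (fM a)).
by apply/forallP => b; rewrite fM.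
Qed.

Lemma rop_inj (R : FinRack) (a : R) : injective (rop a).
Proof. exact: bij_inj (rop_bij a). Qed.

Lemma lpermE (R : FinRack) (a x : R) : lperm a x = rop a x.
Proof. by rewrite permE. Qed.

Lemma lperm_Inn (R : FinRack) (a : R) : lperm a \in Inn R.
Proof. by rewrite mem_gen ?imset_f. Qed.

Lemma Inn_ind (R : FinRack) (P : {perm R} -> Prop) :
  P 1%g -> (forall g h, P g -> P h -> P (g * h)%g) -> (forall a, P (lperm a)) ->
  forall g, g \in Inn R -> P g.
Proof.
move=> P1 PM Plperm.
have PG : group_set [set g | `[< P g >]].
  apply/andP; split; first by rewrite inE asboolT.
  apply/subsetP => gh /mulsgP [g h]; rewrite !inE => /asboolP Pg /asboolP Ph ->.
  exact/asboolP/PM.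
have sub_Inn : Inn R \subset Group PG.
  by rewrite gen_subG; apply/subsetP => _ /imsetP [a _ ->]; rewrite inE asboolT.
by move=> g /(subsetP sub_Inn); rewrite inE => /asboolP.
Qed.

Lemma Inn_mor (K R : FinRack) (f : K -> R) : is_rack_mor f ->
  forall g, g \in Inn K -> exists2 h, h \in Inn R & forall a, f (g a) = h (f a).
Proof.
move=> fM; apply: Inn_ind => [|g g' [h Hh Eh] [h' Hh' Eh']|b].
- by exists 1%g => [|a]; rewrite ?group1 ?perm1.
- by exists (h * h')%g => [|a]; rewrite ?groupM // !permM Eh' Eh.
- by exists (lperm (f b)) => [|a]; rewrite ?lperm_Inn // !lpermE fM.
Qed.

Lemma connected_mor_surj (K R : FinRack) (f : K -> R) :
  is_rack_mor f -> (forall y, exists x, f x = y) -> connected_rack K -> connected_rack R.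
Proof.
move=> fM f_surj [/card_gt0P [a _] K_tr]; split; first by apply/card_gt0P; exists (f a).
move=> u v; have [b <-] := f_surj u; have [c <-] := f_surj v.
have [g Hg <-] := K_tr b c; have [h Hh Eh] := Inn_mor fM Hg.
by exists h; rewrite ?Eh.
Qed.

Definition lmul_stable (R : FinRack) (S : {set R}) : Prop :=
  forall s x, x \in S -> rop s x \in S.

Section StableSets.
Variables (R : FinRack) (S : {set R}).
Hypothesis stS : lmul_stable S.

Lemma lmul_stable_imset s : rop s @: S = S.
Proof.
apply/eqP; rewrite eqEcard card_imset ?leqnn ?andbT; last exact: rop_inj.
by apply/subsetP => _ /imsetP [x Sx ->]; apply: stS.
Qed.

Lemma lmul_stable_subrack : subrack S.
Proof. by move=> s _; apply: lmul_stable_imset. Qed.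

Lemma lmul_stableE s x : (rop s x \in S) = (x \in S).
Proof. by rewrite -{1}(lmul_stable_imset s) (mem_imset _ _ (@rop_inj _ s)). Qed.

Lemma lmul_stableC : lmul_stable (~: S).
Proof. by move=> s x; rewrite !inE lmul_stableE. Qed.

Lemma Inn_stable g : g \in Inn R -> forall x, (g x \in S) = (x \in S).
Proof.
move: g; apply: Inn_ind => [x|g h Pg Ph x|a x]; first by rewrite perm1.
  by rewrite permM Ph Pg.
by rewrite lpermE lmul_stableE.
Qed.

End StableSets.

Lemma connected_mor_stable (C R : FinRack) (f : C -> R) (S : {set R}) :
  connected_rack C -> is_rack_mor f -> lmul_stable S ->
  (forall c, f c \in S) \/ (forall c, f c \notin S).
Proof.
move=> [/card_gt0P [c0 _] C_tr] fM stS.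
have same c : (f c \in S) = (f c0 \in S).
  have [g Hg <-] := C_tr c0 c; have [h Hh ->] := Inn_mor fM Hg.
  exact: Inn_stable Hh _.
by case: (boolP (f c0 \in S)) => [in0|out0]; [left|right] => c; rewrite same.
Qed.

Lemma disconnected_stable (R : FinRack) :
  (0 < #|R|)%N -> ~ connected_rack R ->
  exists S : {set R}, lmul_stable S /\ (0 < #|S| < #|R|)%N.
Proof.
move=> R0 R_disc.
have /existsNP [x /existsNP [y not_xy]] :
    ~ forall x y : R, exists2 g, g \in Inn R & g x = y by move=> R_tr; apply: R_disc.
exists (orbit 'P (Inn R) x); split; last (apply/andP; split).
- move=> s z /orbitP [g Hg <-]; apply/orbitP; exists (g * lperm s)%g.
    by rewrite groupM ?lperm_Inn.
  by rewrite /= apermE permM lpermE.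
- by apply/card_gt0P; exists x; apply: orbit_refl.
- rewrite -cardsT proper_card // properT; apply/eqP => orbT; apply: not_xy.
  by have := in_setT y; rewrite -orbT => /orbitP.
Qed.

Section SubRackFacts.
Variables (R : FinRack) (S : {set R}) (HS : subrack S).

Lemma card_subRack : #|subRack HS| = #|S|.
Proof. exact: card_sig. Qed.

Lemma subRack_val_mor : is_rack_mor (fun x : subRack HS => val x).
Proof. by []. Qed.

Lemma subRack_val_range : [set val x | x : subRack HS] = S.
Proof.
apply/setP => z; apply/imsetP/idP => [[x _ ->]|Sz]; first exact: valP.
by exists (exist (fun z => z \in S) z Sz).
Qed.

End SubRackFacts.

Lemma factor_mor (K R D : FinRack) (e : R -> D) (f : K -> D) :
  is_rack_mor e -> injective e -> is_rack_mor f -> (forall c, f c \in [set e x | x : R]) ->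
  exists2 g : K -> R, is_rack_mor g & forall c, e (g c) = f c.
Proof.
move=> eM e_inj fM f_range.
have [g Eg] : exists g : K -> R, forall c, e (g c) = f c.
  apply: (fin_all_exists (U := fun=> R) (P := fun c x => e x = f c)) => c.
  by have /imsetP [x _ ->] := f_range c; exists x.
by exists g => // a b; apply: e_inj; rewrite eM !Eg fM.
Qed.

Section Embedding.
Variables (R D : FinRack) (e : R -> D).
Hypotheses (eM : is_rack_mor e) (e_inj : injective e).

Lemma Mor_comp_emb (K : FinRack) :
  [set [ffun c => e (g c)] | g : {ffun K -> R} in Mor K R] =
  [set f in Mor K D | [forall c, f c \in [set e x | x : R]]].
Proof.
apply/setP => f; apply/imsetP/idP => [[g /MorP gM ->]|].
  rewrite inE; apply/andP; split; last by apply/forallP => c; rewrite ffunE imset_f.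
  by apply/MorP => a b; rewrite !ffunE gM eM.
rewrite inE => /andP [/MorP fM /forallP f_range].
have [g gM Eg] := factor_mor eM e_inj fM f_range.
exists [ffun c => g c]; first by apply/MorP => a b; rewrite !ffunE gM.
by apply/ffunP => c; rewrite !ffunE Eg.
Qed.

Lemma comp_emb_inj (K : FinRack) : injective (fun g : {ffun K -> R} => [ffun c => e (g c)]).
Proof.
by move=> g g' /ffunP Egg'; apply/ffunP => c; apply: e_inj; have := Egg' c; rewrite !ffunE.
Qed.

Lemma card_Mor_emb (K : FinRack) :
  #|Mor K R| = #|[set f in Mor K D | [forall c, f c \in [set e x | x : R]]]|.
Proof. by rewrite -Mor_comp_emb card_imset //; apply: comp_emb_inj. Qed.

End Embedding.

Lemma card_Mor_iso_r (C R D : FinRack) : rack_iso R D -> #|Mor C R| = #|Mor C D|.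
Proof.
move=> [e [eM e_bij]]; rewrite (card_Mor_emb eM (bij_inj e_bij)); apply: eq_card => f.
rewrite inE andb_idr // => _; apply/forallP => c.
by case: e_bij => e' _ e'K; rewrite -[f c]e'K imset_f.
Qed.

Lemma card_Mor_iso_l (C C' R : FinRack) : rack_iso C C' -> #|Mor C R| = #|Mor C' R|.
Proof.
suff le_Mor A B : rack_iso A B -> (#|Mor B R| <= #|Mor A R|)%N.
  move=> [phi [phiM [psi phiK psiK]]]; apply/eqP; rewrite eqn_leq le_Mor.
    by rewrite le_Mor //; exists phi; split=> //; exists psi.
  exists psi; split; last by exists phi.
  by move=> a b; apply: (can_inj phiK); rewrite phiM !psiK.
move=> [phi [phiM [psi phiK psiK]]].
have comp_inj : injective (fun f : {ffun B -> R} => [ffun a => f (phi a)]).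
  move=> f f' /ffunP Eff'; apply/ffunP => b.
  by have := Eff' (psi b); rewrite !ffunE psiK.
rewrite -(card_imset _ comp_inj); apply/subset_leq_card/subsetP => _ /imsetP [f /MorP fM ->].
by apply/MorP => a b; rewrite !ffunE phiM fM.
Qed.

Lemma card_Mor_subRack (C R : FinRack) (S : {set R}) (HS : subrack S) :
  #|Mor C (subRack HS)| = #|[set f in Mor C R | [forall c, f c \in S]]|.
Proof.
by rewrite (card_Mor_emb (@subRack_val_mor _ _ HS) val_inj) subRack_val_range.
Qed.

Lemma partition_stable (R : FinRack) (S T : {set R}) :
  subrack S -> subrack T -> [disjoint S & T] -> S :|: T = setT -> lmul_stable S.
Proof.
move=> HS HT dis cov s x Sx; have := in_setT s; rewrite -cov inE => /orP [Ss|Ts].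
  by rewrite -(HS s Ss) imset_f.
have := in_setT (rop s x); rewrite -cov inE => /orP [//|].
rewrite -(HT s Ts) => /imsetP [t Tt /rop_inj xt].
by move: Tt; rewrite -xt (disjointFr dis Sx).
Qed.

Lemma card_Mor_decomp (C R : FinRack) (S T : {set R}) (HS : subrack S) (HT : subrack T) :
  connected_rack C -> [disjoint S & T] -> S :|: T = setT ->
  #|Mor C R| = (#|Mor C (subRack HS)| + #|Mor C (subRack HT)|)%N.
Proof.
move=> Cc dis cov; have stS := partition_stable HS HT dis cov.
have inT x : (x \in T) = (x \notin S).
  apply/idP/idP => [Tx|Sx]; first by rewrite (disjointFl dis Tx).
  by have := in_setT x; rewrite -cov inE (negbTE Sx).
rewrite !card_Mor_subRack -(cardsID [set f : {ffun C -> R} | [forall c, f c \in S]] (Mor C R)).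
move: (@MorP C R); move: (Mor C R) => M MP.
congr (_ + _)%N; apply: eq_card => f; rewrite !inE; first by rewrite andbC.
case: (boolP (f \in M)) => [/MP fM|_]; rewrite ?andbF // andbT.
have [c0 _] := card_gt0P Cc.1.
case: (connected_mor_stable Cc fM stS) => f_range.
  by rewrite (introT forallP f_range); apply/esym/negbTE/forallPn; exists c0; rewrite inT negbK.
have -> : [forall c, f c \in T] by apply/forallP => c; rewrite inT f_range.
by apply/forallPn; exists c0; rewrite f_range.
Qed.

Lemma Phi_relator C r : connected_rack C -> relator r -> Phi C r = 0.
Proof.
move=> Cc [[R1 [R2 [iso ->]]]|[R [S [T [HS [HT [dis [cov ->]]]]]]]];
  rewrite PhiE !fsum_evalE /=.
  by rewrite (card_Mor_iso_r _ iso); ring.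
by rewrite (card_Mor_decomp HS HT Cc) // PoszD; ring.
Qed.

Lemma Phi_burnside C x y : connected_rack C -> burnside_eq x y -> Phi C x = Phi C y.
Proof. by move=> Cc; rewrite !PhiE; apply: fsum_eval_burnside => r /(Phi_relator Cc). Qed.

Lemma Phi_iso (C C' : FinRack) x : rack_iso C C' -> Phi C x = Phi C' x.
Proof. by move=> iso; apply: eq_bigr => p _; rewrite (card_Mor_iso_l _ iso). Qed.

Definition supported (P : FinRack -> Prop) (x : fsum) : Prop :=
  forall R, fcoef x R != 0 -> P R.

Lemma supported_nil P : supported P [::].
Proof. by move=> R; rewrite fcoefE fsum_eval_nil eqxx. Qed.

Lemma supported1 P R : P R -> supported P [:: (1, R)].
Proof.
by move=> PR Q; rewrite fcoefE !fsum_evalE; case: asboolP => [<-|]; rewrite ?mulr0 ?eqxx.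
Qed.

Lemma supported_cat P x y : supported P x -> supported P y -> supported P (x ++ y).
Proof.
move=> Px Py R; rewrite fcoefE fsum_eval_cat -!fcoefE.
by case: (eqVneq (fcoef x R) 0) => [->|/Px //]; rewrite add0r => /Py.
Qed.

Lemma supported_scale P c x : supported P x -> supported P (fsum_scale c x).
Proof.
by move=> Px R; rewrite fcoefE fsum_eval_scale -fcoefE mulf_eq0 negb_or => /andP [_ /Px].
Qed.

Lemma burnside_eq_iso R R' : rack_iso R R' -> burnside_eq [:: (1, R)] [:: (1, R')].
Proof.
move=> iso; have rel : relator [:: (1, R); (-1, R')] by left; exists R, R'.
by apply: spanned_ext (spanned_relator rel) => Q; rewrite !fcoefE !fsum_evalE /=; ring.
Qed.

Lemma burnside_eq_decomp (R : FinRack) (S T : {set R}) (HS : subrack S) (HT : subrack T) :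
  [disjoint S & T] -> S :|: T = setT ->
  burnside_eq [:: (1, R)] [:: (1, subRack HS); (1, subRack HT)].
Proof.
move=> dis cov; have rel : relator [:: (1, R); (-1, subRack HS); (-1, subRack HT)].
  by right; exists R, S, T, HS, HT.
by apply: spanned_ext (spanned_relator rel) => Q; rewrite !fcoefE !fsum_evalE /=; ring.
Qed.

Lemma subrackT (R : FinRack) : subrack [set: R].
Proof. by apply: lmul_stable_subrack => s x; rewrite !inE. Qed.

Lemma rack_iso_subrackT (R : FinRack) : rack_iso R (subRack (@subrackT R)).
Proof.
exists (fun x => exist (fun x => x \in setT) x (in_setT x)).
split; first by move=> a b; apply: val_inj.
by exists val => [x|y] //; apply: val_inj.
Qed.

Lemma burnside_eq_empty (R : FinRack) : #|R| = 0%N -> burnside_eq [:: (1, R)] [::].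
Proof.
move=> R0; have dis : [disjoint [set: R] & [set: R]].
  by rewrite disjoints_subset setCT subset0 -cards_eq0 cardsT R0.
have relD := burnside_eq_decomp (@subrackT R) (@subrackT R) dis (setUid _).
have relI := burnside_eq_iso (rack_iso_subrackT R).
(* With R' the copy of R on [set: R]: b(R) = 2 (b(R) - b(R')) - (b(R) - 2 b(R')). *)
apply: spanned_ext (spannedD (spannedZ 2 relI) (spannedZ (-1) relD)) => Q.
by rewrite !fcoefE !fsum_evalE /=; ring.
Qed.

Section NormalForm.
Variables (Reps : FinRack -> Prop).
Hypothesis Reps_cover : forall C, connected_rack C -> exists2 C', Reps C' & rack_iso C C'.

Lemma rack_normal_form R : exists2 L, supported Reps L & burnside_eq [:: (1, R)] L.
Proof.
have [n] := ubnP #|R|; elim: n R => // n IHn R ltRn.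
have [R0|R_gt0] := posnP #|R|.
  by exists [::]; [exact: supported_nil|exact: burnside_eq_empty].
have [Rc|R_disc] := pselect (connected_rack R).
  have [C' RC' iso] := Reps_cover Rc.
  by exists [:: (1, C')]; [exact: supported1|exact: burnside_eq_iso].
have [S [stS /andP [S_gt0 ltSR]]] := disconnected_stable R_gt0 R_disc.
have HS := lmul_stable_subrack stS; have HT := lmul_stable_subrack (lmul_stableC stS).
have le_Rn : (#|R| <= n)%N by rewrite -ltnS.
have [L1 sL1 bL1] : exists2 L, supported Reps L & burnside_eq [:: (1, subRack HS)] L.
  by apply: IHn; rewrite card_subRack (leq_trans ltSR).
have [L2 sL2 bL2] : exists2 L, supported Reps L & burnside_eq [:: (1, subRack HT)] L.
  apply: IHn; rewrite card_subRack (leq_trans _ le_Rn) //.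
  by rewrite -(cardsC S) addnC -addn1 leq_add2l.
exists (L1 ++ L2); first exact: supported_cat.
apply: burnside_eq_trans (burnside_eq_cat bL1 bL2).
by apply: burnside_eq_decomp; rewrite ?setUCr // disjoints_subset setCK.
Qed.

Lemma normal_form x : exists2 xN, supported Reps xN & burnside_eq x xN.
Proof.
elim: x => [|[c R] x [xN sxN bxN]].
  by exists [::]; [exact: supported_nil|exact: burnside_eq_fcoef].
have [L sL bL] := rack_normal_form R.
exists (fsum_scale c L ++ xN); first exact: supported_cat (supported_scale sL) sxN.
have -> : (c, R) :: x = fsum_scale c [:: (1, R)] ++ x by rewrite /= mulr1.
exact/burnside_eq_cat/bxN/burnside_eq_scale.
Qed.

End NormalForm.

Definition embeds (R D : FinRack) (E : {set D}) : Prop :=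
  exists e : R -> D, [/\ is_rack_mor e, injective e & [set e x | x : R] = E].

Definition copies (R D : FinRack) : {set {set D}} := [set E | `[< embeds R E >]].

Definition Mor_onto (K D : FinRack) (E : {set D}) : {set {ffun K -> D}} :=
  [set f in Mor K D | [set f c | c : K] == E].
Arguments Mor_onto K [D] E.

Lemma embeds_card (R D : FinRack) (E : {set D}) : embeds R E -> #|E| = #|R|.
Proof. by case=> e [_ e_inj <-]; rewrite card_imset. Qed.

Lemma embeds_iso (R R' D : FinRack) (E : {set D}) : embeds R E -> embeds R' E <-> rack_iso R' R.
Proof.
move=> embR; have := embeds_card embR; case: embR => e [eM e_inj Ee] cardE.
split=> [[e' [e'M e'_inj Ee']]|[phi [phiM phi_bij]]].
  have e'_range c : e' c \in [set e x | x : R] by rewrite Ee -Ee' imset_f.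
  have [g gM Eg] := factor_mor eM e_inj e'M e'_range.
  exists g; split=> //; apply: inj_card_bij => [x y Exy|].
    by apply: e'_inj; rewrite -!Eg Exy.
  by rewrite -cardE -Ee' card_imset.
exists (fun x => e (phi x)); split => [a b|x y /e_inj/(bij_inj phi_bij) //|].
  by rewrite phiM eM.
rewrite -Ee; apply/setP => y; apply/imsetP/imsetP => [[x _ ->]|[x _ ->]].
  by exists (phi x).
by case: phi_bij => psi _ psiK; exists (psi x); rewrite ?psiK.
Qed.

Lemma card_Mor_onto_emb (K R D : FinRack) (E : {set D}) :
  embeds R E -> #|Mor_onto K E| = #|Mor_onto K [set: R]|.
Proof.
case=> e [eM e_inj <-]; rewrite -(card_imset _ (comp_emb_inj (K := K) e_inj)).
apply: eq_card => f; apply/idP/imsetP => [|[g]].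
  rewrite inE => /andP [fMor /eqP range_f].
  have : f \in [set f in Mor K D | [forall c, f c \in [set e x | x : R]]].
    by rewrite inE fMor; apply/forallP => c; rewrite -range_f imset_f.
  rewrite -(Mor_comp_emb eM e_inj) => /imsetP [g gMor Ef].
  exists g => //; rewrite inE gMor; apply/eqP/setP => y; rewrite inE.
  have : e y \in [set e x | x : R] by apply: imset_f.
  by rewrite -range_f Ef => /imsetP [c _]; rewrite ffunE => /e_inj ->; apply: imset_f.
rewrite inE => /andP [/MorP gM /eqP range_g] ->; rewrite inE; apply/andP; split.
  by apply/MorP => a b; rewrite !ffunE gM eM.
apply/eqP/setP => y; apply/imsetP/imsetP => [[c _ ->]|[x _ ->]].
  by exists (g c); rewrite ?ffunE.
have : x \in [set g c | c : K] by rewrite range_g inE.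
by case/imsetP => c _ ->; exists c; rewrite ?ffunE.
Qed.

Lemma image_subrack (K D : FinRack) (f : K -> D) : is_rack_mor f -> subrack [set f c | c : K].
Proof.
move=> fM _ /imsetP [a _ ->]; apply/eqP.
rewrite eqEcard card_imset ?leqnn ?andbT; last exact: rop_inj.
by apply/subsetP => _ /imsetP [_ /imsetP [b _ ->] ->]; rewrite -fM imset_f.
Qed.

Lemma embeds_image (K D : FinRack) (f : K -> D) :
  connected_rack K -> is_rack_mor f -> exists2 R, connected_rack R & embeds R [set f c | c : K].
Proof.
move=> Kc fM; have img := image_subrack fM.
exists (subRack img); last by exists val; split; [|exact: val_inj|exact: subRack_val_range].
have f_in c : f c \in [set f c | c : K] by apply: imset_f.
pose f' c : subRack img := exist _ (f c) (f_in c).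
apply: (connected_mor_surj (f := f')) Kc => [a b|y]; first by apply: val_inj; rewrite /= fM.
by have /imsetP [c _ yc] := valP y; exists c; apply: val_inj.
Qed.

Lemma Mor_onto_embeds (K D : FinRack) (E : {set D}) f :
  connected_rack K -> f \in Mor_onto K E -> exists2 R, connected_rack R & embeds R E.
Proof. by move=> Kc; rewrite inE => /andP [/MorP fM /eqP <-]; exact: embeds_image. Qed.

Lemma card_Mor_onto_large (K D : FinRack) (E : {set D}) : ~~ (#|E| < #|K|)%N ->
  #|Mor_onto K E| = if E \in copies K D then #|Mor_onto K [set: K]| else 0%N.
Proof.
rewrite inE; case: asboolP => [embK|not_emb] large; first exact: card_Mor_onto_emb.
apply/eqP; rewrite cards_eq0; apply/eqP/setP => f; rewrite in_set0 inE.
apply/negbTE/andP => [[/MorP fM /eqP range_f]]; apply: not_emb; exists f; split=> //.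
have /imset_injP f_inj : #|[set f c | c : K]| == #|K|.
  by rewrite eqn_leq leq_imset_card range_f leqNgt large.
by move=> x y; apply: f_inj.
Qed.

Lemma Mor_onto_self_gt0 (K : FinRack) : (0 < #|Mor_onto K [set: K]|)%N.
Proof.
apply/card_gt0P; exists [ffun c => c]; rewrite inE; apply/andP; split.
  by apply/MorP => a b; rewrite !ffunE.
by apply/eqP/setP => x; rewrite inE; apply/imsetP; exists x; rewrite ?ffunE.
Qed.

Lemma card_Mor_partition (K D : FinRack) : #|Mor K D| = (\sum_(E : {set D}) #|Mor_onto K E|)%N.
Proof.
rewrite -sum1_card (partition_big (fun f : {ffun K -> D} => [set f c | c : K]) predT) //=.
by apply: eq_bigr => E _; rewrite -sum1_card; apply: eq_bigl => f; rewrite !inE.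
Qed.

Lemma card_copies_self (R : FinRack) : #|copies R R| = 1%N.
Proof.
rewrite -(cards1 [set: R]); apply: eq_card => E; rewrite !inE; apply/asboolP/eqP => [embE|->].
  by apply/eqP; rewrite eqEcard subsetT cardsT (embeds_card embE) leqnn.
by exists id; split=> //; apply/setP => x; rewrite inE; apply/imsetP; exists x.
Qed.

Lemma copies_iso (R D : FinRack) (E : {set D}) :
  (#|D| <= #|R|)%N -> E \in copies R D -> rack_iso R D.
Proof.
move=> le_DR; rewrite inE => /asboolP [e [eM e_inj _]].
by exists e; split=> //; exact: inj_card_bij.
Qed.

Definition Psi (R : FinRack) (x : fsum) : int := fsum_eval (fun D => #|copies R D|%:Z) x.

Definition subsets (x : fsum) : seq (int * {D : FinRack & {set D}}) :=
  flatten [seq [seq (p.1, Tagged (fun D : FinRack => {set D}) E) | E : {set p.2}]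
          | p : int * FinRack <- x].

Lemma fsum_eval_subsets (F : forall D : FinRack, {set D} -> int) x :
  fsum_eval (fun D => \sum_(E : {set D}) F D E) x =
  \sum_(q <- subsets x) q.1 * F (tag q.2) (tagged q.2).
Proof.
rewrite /fsum_eval big_flatten big_map; apply: eq_bigr => p _.
by rewrite big_image big_distrr.
Qed.

Lemma card_copiesE (R D : FinRack) :
  #|copies R D|%:Z = \sum_(E : {set D}) if `[< embeds R E >] then 1 else 0.
Proof.
rewrite -sum1_card (big_morph Posz PoszD (erefl _)) big_mkcond /=.
by apply: eq_bigr => E _; rewrite inE.
Qed.

Definition small_onto (K D : FinRack) (E : {set D}) : int :=
  if (#|E| < #|K|)%N then #|Mor_onto K E|%:Z else 0.

Lemma Phi_decomp (K : FinRack) (z : fsum) :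
  Phi K z = \sum_(q <- subsets z) q.1 * small_onto K (tagged q.2) +
            #|Mor_onto K [set: K]|%:Z * Psi K z.
Proof.
rewrite -fsum_eval_subsets /Psi -fsum_evalZ -fsum_evalD PhiE.
congr fsum_eval; apply: funext => D.
rewrite card_Mor_partition (big_morph Posz PoszD (erefl _)) card_copiesE big_distrr -big_split.
apply: eq_bigr => E _; rewrite /small_onto /=.
have [ltEK|geEK] := ltnP #|E| #|K|.
  case: asboolP => [/embeds_card cardE|_]; last by rewrite mulr0 addr0.
  by move: ltEK; rewrite cardE ltnn.
rewrite leqNgt in geEK; rewrite add0r (card_Mor_onto_large geEK) inE.
by case: asboolP; rewrite ?mulr1 ?mulr0.
Qed.

Lemma embeds_class (R D D' : FinRack) (E : {set D}) (E' : {set D'}) : embeds R E ->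
  (fun R' => embeds R' E') = (fun R' => embeds R' E) <-> embeds R E'.
Proof.
move=> embE; split=> [same|embE']; first exact: eq_ind _ (fun P => P R) embE _ (esym same).
apply: funext => R'; apply: propext.
by rewrite (embeds_iso _ embE) (embeds_iso _ embE').
Qed.

Lemma card_Mor_onto_eq0 (K D : FinRack) (E : {set D}) :
  connected_rack K -> (forall R, ~ embeds R E) -> #|Mor_onto K E| = 0%N.
Proof.
move=> Kc no_emb; apply/eqP; rewrite cards_eq0; apply/eqP/setP => f; rewrite in_set0.
by apply/negbTE/negP => /(Mor_onto_embeds Kc) [R _ /no_emb].
Qed.

Lemma small_onto_class (K D D' : FinRack) (E : {set D}) (E' : {set D'}) :
  connected_rack K -> (fun R => embeds R E) = (fun R => embeds R E') ->
  small_onto K E = small_onto K E'.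
Proof.
move=> Kc same; have sameR R : embeds R E = embeds R E' := congr1 (@^~ R) same.
rewrite /small_onto; have [[R embR]|no_emb] := pselect (exists R, embeds R E).
  have embR' : embeds R E' by rewrite -sameR.
  rewrite (embeds_card embR) (embeds_card embR').
  by rewrite (card_Mor_onto_emb _ embR) (card_Mor_onto_emb _ embR').
have no_embE R : ~ embeds R E by move=> embR; apply: no_emb; exists R.
have no_embE' R : ~ embeds R E' by rewrite -sameR.
by rewrite !card_Mor_onto_eq0 //; case: ifP; case: ifP.
Qed.

Lemma Psi_fiber (R D : FinRack) (E : {set D}) (z : fsum) : embeds R E ->
  \sum_(q <- subsets z | `[< (fun R' => embeds R' (tagged q.2)) = (fun R' => embeds R' E) >]) q.1
  = Psi R z.
Proof.
move=> embR.
transitivity (\sum_(q <- subsets z) q.1 * (if `[< embeds R (tagged q.2) >] then 1 else 0)).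
  rewrite big_mkcond; apply: eq_bigr => [[c [D' E']]] _ /=.
  by rewrite (asbool_equiv_eq (embeds_class _ embR)); case: asboolP; rewrite ?mulr1 ?mulr0.
rewrite -(fsum_eval_subsets (fun D E => if `[< embeds R E >] then 1 else 0)).
by rewrite /Psi; congr fsum_eval; apply: funext => D'; rewrite card_copiesE.
Qed.

Lemma Psi_eq0_of_Phi_eq0 (z : fsum) :
  (forall K, connected_rack K -> Phi K z = 0) -> forall K, connected_rack K -> Psi K z = 0.
Proof.
move=> Phi0 K; have [n] := ubnP #|K|; elim: n K => // n IHn K ltKn Kc.
have small0 : \sum_(q <- subsets z) q.1 * small_onto K (tagged q.2) = 0.
  (* group the subsets E by the isomorphism class of the racks embedding onto E *)
  apply: (big_fiber_eq0 (kappa := fun q R => embeds R (tagged q.2))).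
    by move=> [c [D E]] [c' [D' E']] /=; apply: small_onto_class.
  move=> [c [D E]] /=; rewrite /small_onto; case: ifP => [ltEK nz|]; last by rewrite eqxx.
  have /card_gt0P [f fE] : (0 < #|Mor_onto K E|)%N by rewrite lt0n -eqz_nat.
  have [R Rc embR] := Mor_onto_embeds Kc fE.
  rewrite (Psi_fiber _ embR); apply: IHn => //.
  by rewrite -(embeds_card embR) (leq_trans ltEK) // -ltnS.
have := Phi0 K Kc; rewrite Phi_decomp small0 add0r => /eqP.
by rewrite mulf_eq0 eqz_nat eqn0Ngt Mor_onto_self_gt0 => /eqP.
Qed.

Lemma fcoef_eq0_large (z : fsum) (R : FinRack) : (\max_(p <- z) #|p.2| < #|R|)%N -> fcoef z R = 0.
Proof.
elim: z => [|p z IHz]; first by rewrite fcoefE fsum_eval_nil.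
rewrite big_cons gtn_max => /andP [ltpR ltzR].
rewrite fcoefE fsum_eval_cons -fcoefE IHz // addr0.
by case: asboolP => [pR|_]; [move: ltpR; rewrite pR ltnn | rewrite mulr0].
Qed.

Lemma fcoef_eq0_of_Psi_eq0 (Reps : FinRack -> Prop)
  (Reps_uniq : forall C1 C2, Reps C1 -> Reps C2 -> rack_iso C1 C2 -> C1 = C2) (z : fsum) :
  supported Reps z -> (forall K, Reps K -> Psi K z = 0) -> forall R, fcoef z R = 0.
Proof.
move=> supp Psi0; set B := \max_(p <- z) #|p.2|.
suff large m (R : FinRack) : (B < #|R| + m)%N -> fcoef z R = 0.
  by move=> R; apply: (large B.+1); rewrite addnS ltnS leq_addl.
elim: m R => [|m IHm] R ltBR; first by apply: fcoef_eq0_large; rewrite -(addn0 #|R|).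
have [//|/supp RR] := eqVneq (fcoef z R) 0.
apply/eqP; rewrite -(Psi0 R RR) fcoefE -subr_eq0 -fsum_evalB; apply/eqP.
apply: fsum_eval_eq0 => D.
have [ltRD _|leDR] := ltnP #|R| #|D|.
  by apply: IHm; rewrite (leq_trans ltBR) // addnS ltn_add2r.
have [//|/supp RD] := eqVneq (fcoef z D) 0.
have [->|neDR] := pselect (D = R); first by rewrite asboolT // card_copies_self subrr eqxx.
suff -> : #|copies R D| = 0%N by rewrite asboolF // subrr eqxx.
apply/eqP; rewrite cards_eq0; apply/eqP/setP => E; rewrite in_set0.
by apply/negbTE/negP => /(copies_iso leDR) /(Reps_uniq _ _ RR RD) /esym.
Qed.


Unset Implicit Arguments.

Theorem theorem5p8 (Reps : FinRack -> Prop)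
  (Reps_conn : forall C, Reps C -> connected_rack C)
  (Reps_cover : forall C, connected_rack C -> exists2 C', Reps C' & rack_iso C C')
  (Reps_uniq : forall C1 C2, Reps C1 -> Reps C2 -> rack_iso C1 C2 -> C1 = C2)
  (x y : fsum) :
  (forall C, Reps C -> Phi C x = Phi C y) -> burnside_eq x y.
Proof.
move=> Phi_xy.
have [xN supp_xN x_xN] := normal_form Reps_cover x.
have [yN supp_yN y_yN] := normal_form Reps_cover y.
pose z := xN ++ fsum_scale (-1) yN.
have Phi_z K : connected_rack K -> Phi K z = 0.
  move=> Kc; have [K' RK' KK'] := Reps_cover K Kc; have K'c := Reps_conn K' RK'.
  rewrite (Phi_iso _ KK') PhiE fsum_eval_cat fsum_eval_scale -!PhiE.
  by rewrite -(Phi_burnside K'c x_xN) -(Phi_burnside K'c y_yN) Phi_xy // mulN1r subrr.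
have supp_z : supported Reps z := supported_cat supp_xN (supported_scale supp_yN).
have Psi_z K : Reps K -> Psi K z = 0.
  by move=> RK; apply: Psi_eq0_of_Phi_eq0 Phi_z _ (Reps_conn K RK).
have z0 := fcoef_eq0_of_Psi_eq0 Reps_uniq supp_z Psi_z.
apply: burnside_eq_trans x_xN (burnside_eq_trans _ (burnside_eq_sym y_yN)).
apply: burnside_eq_fcoef => R; apply/eqP; rewrite -subr_eq0; apply/eqP.
by have := z0 R; rewrite fcoefE fsum_eval_cat fsum_eval_scale -!fcoefE mulN1r.
Qed.
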